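(* Let $n\in\mathbb{Z}_+$, $\mathbf{a}=(a_n,\dots,a_{2n})\in\mathbb{C}^{n+1}$, $\lambda\in\mathbb{C}^*$, $\alpha\in\mathbb{C}$ and $h\in\mathbb{C}[t]$. Let $\mathfrak{b}_{\lambda,n+1}=\mathrm{span}\{d_k-\lambda^{k-n}d_n\mid k\ge n+1\}\subseteq\mathrm{Vir}$, and let $\mathbb{C}[t]_{\alpha,h,\mathbf{a}}$ be $\mathbb{C}[t]$ with the $\mathfrak{b}_{\lambda,n+1}$-module structure $$(d_k-\lambda^{k-n}d_n)\circ f=(k-n)\lambda^k\big(G(f)-(k+n)\alpha F(f)\big)+(a_k-\lambda^{k-n}a_n)f,\qquad k\ge n+1,$$ where $a_k:=0$ for $k>2n$. Then $\mathbb{C}[t]_{\alpha,h,\mathbf{a}}$ is an irreducible $\mathfrak{b}_{\lambda,n+1}$-module if and only if $\alpha\neq0$ and $\deg(h)=1$.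
   Context: $\mathrm{Vir}$ is the Lie algebra with basis $\{d_i,c\mid i\in\mathbb{Z}\}$ and brackets $[d_i,d_j]=(j-i)d_{i+j}+\delta_{i,-j}\frac{i^3-i}{12}c$, $[c,d_i]=0$; $\mathfrak{b}_{\lambda,n+1}$ is a Lie subalgebra. For $\alpha\in\mathbb{C}$, $h\in\mathbb{C}[t]$, the operators on $\mathbb{C}[t]$ are $F(f)=\frac{h(t)-h(\alpha)}{t-\alpha}f(t)-f'(t)$ and $G(f)=h(\alpha)f+tF(f)$. *)

From HB Require Import structures.
From mathcomp Require Import all_boot all_order all_algebra.
From mathcomp Require Import complex.
From mathcomp Require Import Rstruct.
Set Implicit Arguments. Unset Strict Implicit. Unset Printing Implicit Defensive.
Import Order.TTheory GRing.Theory Num.Theory.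
Local Open Scope ring_scope.

Definition C : Type := (Rdefinitions.R)[i].
HB.instance Definition _ := GRing.Field.on C.

Definition opF (alpha : C) (h f : {poly C}) : {poly C} :=
  ((h - (h.[alpha])%:P) %/ ('X - alpha%:P)) * f - f^`().

Definition opG (alpha : C) (h f : {poly C}) : {poly C} :=
  h.[alpha] *: f + 'X * opF alpha h f.

(* a = (a_n, ..., a_{2n}) given as a function on nat (only the values at
   indices n..2n are used); the convention a_k := 0 for k > 2n. *)
Definition aext (n : nat) (a : nat -> C) (k : nat) : C :=
  if (k <= 2 * n)%N then a k else 0.

(* Action of the basis element d_k - lambda^(k-n) d_n (k >= n+1) on C[t]. *)
Definition bact (n : nat) (a : nat -> C) (lambda alpha : C) (h : {poly C})
    (k : nat) (f : {poly C}) : {poly C} :=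
  ((k - n)%:R * lambda ^+ k) *:
     (opG alpha h f - ((k + n)%:R * alpha) *: opF alpha h f)
  + (aext n a k - lambda ^+ (k - n) * aext n a n) *: f.

Definition is_submodule (n : nat) (a : nat -> C) (lambda alpha : C)
    (h : {poly C}) (W : {poly C} -> Prop) : Prop :=
  [/\ W 0,
      (forall f g, W f -> W g -> W (f + g)),
      (forall (c : C) f, W f -> W (c *: f)) &
      (forall (k : nat) f, (n < k)%N -> W f -> W (bact n a lambda alpha h k f))].

Definition irreducible_bmodule (n : nat) (a : nat -> C) (lambda alpha : C)
    (h : {poly C}) : Prop :=
  (exists f : {poly C}, f != 0) /\
  forall W, is_submodule n a lambda alpha h W ->
    (forall f, W f -> f = 0) \/ (forall f, W f).

From HB Require Import structures.
From mathcomp Require Import all_boot all_order all_algebra.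
From mathcomp Require Import complex Rstruct.
From mathcomp Require Import ring zify.
From Stdlib Require Import Classical.

Set Implicit Arguments.
Unset Strict Implicit.
Unset Printing Implicit Defensive.
Import GRing.Theory Num.Theory.
Local Open Scope ring_scope.

(* For k > 2n, lambda^-k (d_k - lambda^(k-n) d_n) acts on f as a polynomial of
   degree two in k built from G f, F f and f, with leading coefficient -alpha F f.
   Taking second and first differences in k shows that, when alpha and lambda are
   nonzero, every submodule is stable under F and G, hence under f |-> t F(f).
   If deg h = 1 then F = c - d/dt with c != 0: a nonzero submodule contains 1 by
   differentiating, then every monomial since t F(t^i) = c t^(i+1) - i t^i.
   Otherwise there is a proper nonzero submodule: the polynomials vanishing at 0
   if alpha = 0, the constants if h is constant, and the image of F if deg h >= 2
   (F raises degrees, so 1 is not in it). *)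

Lemma size_deriv_pchar0 (R : idomainType) (p : {poly R}) :
  [pchar R] =i pred0 -> size p^`() = (size p).-1.
Proof.
move=> /pcharf0P R0; have [le1|gt1] := leqP (size p) 1.
  by rewrite [p]size1_polyC // derivC size_poly0 size_polyC; case: (_ != 0).
rewrite size_poly_eq //; have -> : (size p).-2.+1 = (size p).-1 by lia.
by rewrite -mulr_natr mulf_eq0 R0 -lead_coefE lead_coef_eq0 -size_poly_eq0; lia.
Qed.

Lemma size_mul_subr_deriv (R : idomainType) (q p : {poly R}) :
  (1 < size q)%N -> p != 0 -> size (q * p - p^`()) = size (q * p).
Proof.
move=> q_gt1 p_neq0; have q_neq0 : q != 0 by rewrite -size_poly_gt0; lia.
rewrite size_polyDl // size_polyN size_mul //.
have : (0 < size p)%N by rewrite size_poly_gt0.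
have := lt_size_deriv p_neq0.
move: (size p^`()) (size p) (size q) q_gt1 => x y z; lia.
Qed.

Lemma deriv_closed_contains1 (K : fieldType) (P : {poly K} -> Prop)
    (p : {poly K}) :
  [pchar K] =i pred0 ->
  (forall c q, P q -> P (c *: q)) -> (forall q, P q -> P q^`()) ->
  P p -> p != 0 -> P 1.
Proof.
move=> K0 PZ Pderiv.
elim: {p}(size p) {-2}p (erefl (size p)) => [|s IHs] p sz_p Pp p_neq0.
  by move: p_neq0; rewrite -size_poly_eq0 sz_p.
have [s0|s_gt0] := posnP s.
  have p_const : p = (p`_0)%:P by apply: size1_polyC; rewrite sz_p s0.
  have c_neq0 : p`_0 != 0 by rewrite -polyC_eq0 -p_const.
  by have := PZ (p`_0)^-1 _ Pp; rewrite {2}p_const -mul_polyC -polyCM mulVf.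
apply: (IHs p^`()); rewrite ?size_deriv_pchar0 ?sz_p //; first exact: Pderiv.
by rewrite -size_poly_eq0 size_deriv_pchar0 // sz_p; lia.
Qed.

Lemma poly_monomial_ind (R : nzRingType) (P : {poly R} -> Prop) :
  P 0 -> (forall p q, P p -> P q -> P (p + q)) -> (forall c i, P (c *: 'X^i)) ->
  forall p, P p.
Proof.
move=> P0 PD PX p; rewrite -[p]coefK poly_def.
by elim/big_ind: _ => // i _; apply: PX.
Qed.

Definition diffq (alpha : C) (h : {poly C}) : {poly C} :=
  (h - (h.[alpha])%:P) %/ ('X - alpha%:P).

Lemma opFE alpha h f : opF alpha h f = diffq alpha h * f - f^`().
Proof. by []. Qed.

Lemma opGE alpha h f : opG alpha h f = h.[alpha] *: f + 'X * opF alpha h f.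
Proof. by []. Qed.

Lemma opFD alpha h : {morph opF alpha h : f g / f + g}.
Proof. by move=> f g; rewrite !opFE derivD mulrDr opprD addrACA. Qed.

Lemma opFZ alpha h c : {morph opF alpha h : f / c *: f}.
Proof. by move=> f; rewrite !opFE derivZ scalerBr scalerAr. Qed.

Lemma opFN alpha h : {morph opF alpha h : f / - f}.
Proof. by move=> f; rewrite -scaleN1r opFZ scaleN1r. Qed.

Lemma opF0 alpha h : opF alpha h 0 = 0.
Proof. by rewrite opFE deriv0 mulr0 subr0. Qed.

Lemma opF_mulX alpha h f : opF alpha h ('X * f) = 'X * opF alpha h f - f.
Proof. by rewrite !opFE derivM derivX mul1r; ring. Qed.

Lemma opG_opF alpha h g :
  opG alpha h (opF alpha h g) = opF alpha h (opG alpha h g + g).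
Proof.
by rewrite !opGE [RHS]opFD [in RHS]opFD [in RHS]opFZ opF_mulX -[RHS]addrA subrK.
Qed.

Lemma mul_diffq_XsubC alpha h : diffq alpha h * ('X - alpha%:P) = h - h.[alpha]%:P.
Proof. by rewrite divpK // dvdp_XsubCl /root !hornerE subrr. Qed.

Lemma size_diffq alpha h : size (diffq alpha h) = (size h).-1.
Proof.
have [le1|gt1] := leqP (size h) 1.
  rewrite /diffq [h]size1_polyC // hornerC subrr div0p size_poly0.
  by rewrite size_polyC; case: (_ != 0).
have sz_num : size (h - h.[alpha]%:P) = size h.
  by rewrite size_polyDl // size_polyN size_polyC; case: (_ != 0); lia.
have q_neq0 : diffq alpha h != 0.
  apply: contraTneq gt1 => q0; move: sz_num.
  by rewrite -mul_diffq_XsubC q0 mul0r size_poly0 => <-.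
by rewrite -sz_num -mul_diffq_XsubC size_mul ?polyXsubC_eq0 // size_XsubC addn2.
Qed.

Lemma bactE_gt n m (a : nat -> C) (lambda alpha : C) (h f : {poly C}) :
  (n < m)%N ->
  bact n a lambda alpha h (n + m) f =
  (m%:R * lambda ^+ (n + m)) *:
     (opG alpha h f - ((m + 2 * n)%:R * alpha) *: opF alpha h f)
  - (lambda ^+ m * a n) *: f.
Proof.
move=> ltnm; rewrite /bact /aext ifN; last by rewrite -ltnNge; lia.
have -> : (n + m + n = m + 2 * n)%N by lia.
by rewrite leq_pmull // addKn sub0r scaleNr.
Qed.

Lemma bact_second_difference n m (a : nat -> C) (lambda alpha : C)
    (h f : {poly C}) : (n < m)%N ->
  lambda ^+ 2 *: bact n a lambda alpha h (n + m) f
  - (2 * lambda) *: bact n a lambda alpha h (n + m.+1) f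
  + bact n a lambda alpha h (n + m.+2) f
  = (- 2 * alpha * lambda ^+ (n + m.+2)) *: opF alpha h f.
Proof.
move=> ltnm; have ltnm1 : (n < m.+1)%N by lia.
rewrite !bactE_gt // 1?ltnW //.
by rewrite -!mul_polyC !exprD !exprS; ring.
Qed.

Lemma bact_first_difference n m (a : nat -> C) (lambda alpha : C)
    (h f : {poly C}) : (n < m)%N ->
  lambda *: bact n a lambda alpha h (n + m.+1) f
  - lambda ^+ 2 *: bact n a lambda alpha h (n + m) f
  = lambda ^+ (n + m.+2) *:
      (opG alpha h f - ((2 * (m + n)).+1%:R * alpha) *: opF alpha h f).
Proof.
move=> ltnm; rewrite !bactE_gt //; last exact: ltnW.
by rewrite -!mul_polyC !exprD !exprS; ring.
Qed.

Lemma mulX_opF_Xn alpha h (c : C) (i : nat) : diffq alpha h = c%:P ->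
  'X * opF alpha h 'X^i = c *: 'X^(i.+1) - i%:R *: 'X^i.
Proof.
move=> q_const; rewrite opFE q_const derivXn mul_polyC mulrBr -scalerAr -exprS.
by case: i => [|i]; rewrite ?mulr0n ?mulr0 ?scale0r // mulrnAr -exprS scaler_nat.
Qed.

Lemma diffq_size2 alpha (h : {poly C}) :
  size h = 2%N -> exists2 c, c != 0 & diffq alpha h = c%:P.
Proof.
move=> sz_h; have sz_q : size (diffq alpha h) = 1%N by rewrite size_diffq sz_h.
have q_const := size1_polyC (eq_leq sz_q).
exists (diffq alpha h)`_0 => //.
by apply/eqP => q0; move: sz_q; rewrite q_const q0 size_poly0.
Qed.

Section Submodule.

Variables (n : nat) (a : nat -> C) (lambda alpha : C) (h : {poly C}).
Variable W : {poly C} -> Prop.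
Hypothesis W_submod : is_submodule n a lambda alpha h W.

Lemma submod0 : W 0. Proof. by case: W_submod. Qed.

Lemma submodD f g : W f -> W g -> W (f + g).
Proof. by case: W_submod => _ WD _ _; apply: WD. Qed.

Lemma submodZ c f : W f -> W (c *: f).
Proof. by case: W_submod => _ _ WZ _; apply: WZ. Qed.

Lemma submodB f g : W f -> W g -> W (f - g).
Proof. by move=> Wf Wg; rewrite -scaleN1r; apply/submodD/submodZ. Qed.

Lemma submod_bact k f : (n < k)%N -> W f -> W (bact n a lambda alpha h k f).
Proof. by case: W_submod => _ _ _ Wb; apply: Wb. Qed.

Lemma submodZ_unit c f : c != 0 -> W (c *: f) -> W f.
Proof. by move=> c_neq0 /(submodZ c^-1); rewrite scalerA mulVf // scale1r. Qed.

Hypotheses (lambda_neq0 : lambda != 0) (alpha_neq0 : alpha != 0).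

Lemma submod_opF f : W f -> W (opF alpha h f).
Proof.
move=> Wf; apply: (@submodZ_unit (- 2 * alpha * lambda ^+ (n + n.+3))).
  by rewrite !mulf_neq0 ?expf_neq0 // oppr_eq0 pnatr_eq0.
rewrite -(bact_second_difference a lambda alpha h f (ltnSn n)).
have Wb k : (n < k)%N -> W (bact n a lambda alpha h (n + k) f).
  by move=> ltnk; apply: submod_bact (ltn_addl _ ltnk) Wf.
by apply: submodD; [apply: submodB; apply: submodZ|]; apply: Wb; lia.
Qed.

Lemma submod_opG f : W f -> W (opG alpha h f).
Proof.
move=> Wf; set t := (2 * (n.+1 + n)).+1%:R * alpha.
rewrite -[opG _ _ _](subrK (t *: opF alpha h f)).
apply/submodD/submodZ/submod_opF => //.
apply: (@submodZ_unit (lambda ^+ (n + n.+3))); first exact: expf_neq0.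
rewrite -(bact_first_difference a lambda alpha h f (ltnSn n)).
by apply: submodB; apply: submodZ; apply: submod_bact Wf; rewrite ltn_addl.
Qed.

Lemma submod_mulX_opF f : W f -> W ('X * opF alpha h f).
Proof.
have -> : 'X * opF alpha h f = opG alpha h f - h.[alpha] *: f.
  by rewrite opGE addrAC subrr add0r.
by move=> Wf; apply: submodB; [apply: submod_opG | apply: submodZ].
Qed.

Variable c : C.
Hypotheses (c_neq0 : c != 0) (diffq_const : diffq alpha h = c%:P).

Lemma submod_deriv f : W f -> W f^`().
Proof.
have -> : f^`() = c *: f - opF alpha h f.
  by rewrite opFE diffq_const mul_polyC opprB addrC subrK.
by move=> Wf; apply: submodB; [apply: submodZ | apply: submod_opF].
Qed.

Lemma submod_Xn i : W 1 -> W 'X^i.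
Proof.
move=> W1; elim: i => [|i IHi]; first by rewrite expr0.
apply: (@submodZ_unit c) => //.
rewrite -[_ *: _](subrK (i%:R *: 'X^i)) -(mulX_opF_Xn _ diffq_const).
by apply: submodD; [apply: submod_mulX_opF | apply: submodZ].
Qed.

Lemma submod_full f : W f -> f != 0 -> forall g, W g.
Proof.
move=> Wf f_neq0.
have W1 := deriv_closed_contains1 (pchar_num C) submodZ submod_deriv Wf f_neq0.
apply: poly_monomial_ind => [|p q|c' i]; [exact: submod0 | exact: submodD |].
exact/submodZ/submod_Xn.
Qed.

End Submodule.

Lemma not_irreducible_of_proper n (a : nat -> C) (lambda alpha : C) (h : {poly C})
    (W : {poly C} -> Prop) (f g : {poly C}) :
  is_submodule n a lambda alpha h W -> W f -> f != 0 -> ~ W g ->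
  ~ irreducible_bmodule n a lambda alpha h.
Proof.
move=> W_submod Wf f_neq0 Wg [_ /(_ W W_submod) [W0 | WT]]; last exact/Wg/WT.
by move/eqP: f_neq0; rewrite (W0 f Wf).
Qed.

Lemma root0_submodule n (a : nat -> C) (lambda : C) (h : {poly C}) :
  is_submodule n a lambda 0 h (fun f => root f 0).
Proof.
split=> [|f g|c f|k f _]; rewrite /root ?hornerE //.
- by move=> /eqP-> /eqP->; rewrite addr0.
- by move=> /eqP->; rewrite mulr0.
by move=> /eqP->; rewrite !(mulr0, subr0, addr0).
Qed.

Lemma not_irreducible_alpha0 n (a : nat -> C) (lambda : C) (h : {poly C}) :
  ~ irreducible_bmodule n a lambda 0 h.
Proof.
apply: (not_irreducible_of_proper (f := 'X) (g := 1)
  (root0_submodule n a lambda h)).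
- by rewrite /root hornerX.
- by rewrite polyX_eq0.
by rewrite /root hornerC oner_eq0.
Qed.

Lemma const_submodule n (a : nat -> C) (lambda alpha : C) (h : {poly C}) :
  (size h <= 1)%N -> is_submodule n a lambda alpha h (fun f => (size f <= 1)%N).
Proof.
move=> sz_h; have q0 : diffq alpha h = 0.
  by apply/eqP; rewrite -size_poly_eq0 size_diffq; case: (size h) sz_h => [|[]].
split=> [|f g sz_f sz_g|c f sz_f|k f _ sz_f]; first by rewrite size_poly0.
- by rewrite (leq_trans (size_polyD _ _)) // geq_max sz_f.
- exact: leq_trans (size_scale_leq _ _) _.
have opF_f : opF alpha h f = 0.
  by rewrite opFE q0 mul0r [f]size1_polyC // derivC subr0.
rewrite /bact opGE opF_f mulr0 !scaler0 !addr0 subr0 scalerA -scalerDl.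
exact: leq_trans (size_scale_leq _ _) _.
Qed.

Lemma not_irreducible_size_le1 n (a : nat -> C) (lambda alpha : C) (h : {poly C}) :
  (size h <= 1)%N -> ~ irreducible_bmodule n a lambda alpha h.
Proof.
move=> sz_h; apply: (not_irreducible_of_proper (f := 1) (g := 'X)
  (const_submodule n a lambda alpha sz_h)).
- by rewrite size_poly1.
- exact: oner_neq0.
by rewrite size_polyX.
Qed.

Lemma opF_image_submodule n (a : nat -> C) (lambda alpha : C) (h : {poly C}) :
  is_submodule n a lambda alpha h (fun f => exists g, f = opF alpha h g).
Proof.
split=> [|_ _ [f ->] [g ->]|c _ [f ->]|k _ _ [g ->]].
- by exists 0; rewrite opF0.
- by exists (f + g); rewrite opFD.
- by exists (c *: f); rewrite opFZ.
rewrite /bact opG_opF -!opFZ -opFN -opFD -opFZ -opFD.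
by eexists.
Qed.

Lemma not_irreducible_size_gt2 n (a : nat -> C) (lambda alpha : C) (h : {poly C}) :
  (2 < size h)%N -> ~ irreducible_bmodule n a lambda alpha h.
Proof.
move=> sz_h; have sz_q : (1 < size (diffq alpha h))%N by rewrite size_diffq; lia.
apply: (not_irreducible_of_proper (f := diffq alpha h) (g := 1)
  (opF_image_submodule n a lambda alpha h)).
- by exists 1; rewrite opFE mulr1 derivC subr0.
- by rewrite -size_poly_gt0; lia.
case=> g one_eq; have g_neq0 : g != 0.
  by apply: contraPneq one_eq => ->; rewrite opF0; apply/eqP/oner_neq0.
have q_neq0 : diffq alpha h != 0 by rewrite -size_poly_gt0; lia.
have : size (opF alpha h g) = (size (diffq alpha h) + size g).-1.
  by rewrite opFE size_mul_subr_deriv // size_mul.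
rewrite -one_eq size_poly1; have : (0 < size g)%N by rewrite size_poly_gt0.
by move: (size g) (size (diffq alpha h)) sz_q => x y; lia.
Qed.

Lemma irreducible_size2 n (a : nat -> C) (lambda alpha : C) (h : {poly C}) :
  lambda != 0 -> alpha != 0 -> size h = 2%N -> irreducible_bmodule n a lambda alpha h.
Proof.
move=> lambda_neq0 alpha_neq0 sz_h.
have [c c_neq0 q_const] := diffq_size2 alpha sz_h.
split=> [|W W_submod]; first by exists 1; rewrite oner_neq0.
have [[f [Wf f_neq0]]|W_eq0] := classic (exists f, W f /\ f != 0).
  right=> g.
  exact: (submod_full W_submod lambda_neq0 alpha_neq0 c_neq0 q_const Wf f_neq0 g).
by left=> f Wf; apply/eqP; apply: contra_notT W_eq0 => f_neq0; exists f.
Qed.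

Theorem proposition5p1 (n : nat) (a : nat -> C) (lambda alpha : C)
    (h : {poly C}) :
  (0 < n)%N -> lambda != 0 ->
  irreducible_bmodule n a lambda alpha h <-> (alpha != 0 /\ size h = 2%N).
Proof.
(* The argument does not use 0 < n. *)
move=> _ lambda_neq0.
split=> [irr | [alpha_neq0 sz_h]]; last exact: irreducible_size2.
split.
  apply/eqP => alpha0; move: irr; rewrite alpha0.
  exact: not_irreducible_alpha0.
case: (ltngtP (size h) 2) => // sz_h; exfalso; move: irr.
  exact: not_irreducible_size_le1.
exact: not_irreducible_size_gt2.
Qed.
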